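(* Assume $d\ge3$ and $d'=1$, write the unique row of $V$ as $v=(v_1,\dots,v_d)$, and fix $j\in[t]$. For parameters $W$, let $T=(T_{k_1k_2k_3})_{k_1,k_2,k_3\in[d]}$ be the symmetric tensor with $T_{k_1k_2k_3}=y_j(\{k_1,k_2,k_3\})$ evaluated at $\mu(W)$, and let $f_T(x)=\sum_{k_1,k_2,k_3\in[d]}T_{k_1k_2k_3}x_{k_1}x_{k_2}x_{k_3}$. Let $N=(T_{k,k,k_3})_{k,k_3\in[d]}\in\mathbb R^{d\times d}$. Then: (1) $\operatorname{rank}(N)\le 2\operatorname{rank}(A)+1$; in particular, if $2\operatorname{rank}(A)+1<d$ then all $(2\operatorname{rank}(A)+2)$-minors of $N$ vanish. (2) $f_T(x)=(x^\top Ax)(v^\top x)$, so $f_T$ is a product of a linear form and a quadratic form (if $f_T\neq0$, $[f_T]$ lies on the Chow variety of split type $(2,1)$ in $\mathbb P(S^3)$). Consequently $M_{\mathrm{Lie}}(f_T)$ has rank $<d^2-1$, and every maximal $(d^2-1)\times(d^2-1)$ minor of $M_{\mathrm{Lie}}$, regarded as a polynomial in the coordinates $y_j(\mathcal K)$ via the coefficients of $f_T$, vanishes on the attention variety.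
   Context: Setup: $Q,K\in\mathbb R^{a\times d}$, $V\in\mathbb R^{1\times d}$, $A=K^\top Q$, $\varphi_W(X)=VX(X^\top AX)$ for $X=(x_{kn})\in\mathbb R^{d\times t}$. For $\mathcal K\in\operatorname{Mult}_3([d])$ (size-3 multisets on $[d]$), $c_j(\mathcal K)$ is the coefficient of $\prod_{u\in\mathcal K}x_{uj}$ in $\varphi_W(X)[1,j]$ and $y_j(\mathcal K)=c_j(\mathcal K)/|\operatorname{Perm}(\mathcal K)|$, where $\operatorname{Perm}(\mathcal K)$ is the set of distinct orderings of $\mathcal K$. The map $\mu$ sends $W$ to all such scaled coefficients (and the analogous scaled cross-column coefficients); the attention variety is the Zariski closure of $\operatorname{im}\mu$. $S^3$ is the space of cubic forms in $x_1,\dots,x_d$. The Lie algebra flattening matrix $M_{\mathrm{Lie}}(f)$ of a cubic $f$ is the $\binom{d+2}{3}\times(d^2-1)$ matrix, in the monomial basis of $S^3$ and the basis $\{E_{uv}\ (u\ne v),\ H_u=E_{uu}-E_{dd}\ (u<d)\}$ of $\mathfrak{sl}_d$ (with $E_{uv}=x_u\partial/\partial x_v$), of the linear map $\mathfrak{sl}_d\to S^3$, $D\mapsto D(f)$, where $(m_{uv})$ acts as $\sum m_{uv}x_u\partial/\partial x_v$. The Chow variety of split type $(2,1)$ is the image of $\mathbb P(S^1)\times\mathbb P(S^2)\to\mathbb P(S^3)$, $([\ell],[q])\mapsto[\ell q]$. *)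

From HB Require Import structures.
From mathcomp Require Import all_boot all_order all_algebra.
From mathcomp Require Import mpoly.
Set Implicit Arguments. Unset Strict Implicit. Unset Printing Implicit Defensive.
Import Order.TTheory GRing.Theory Num.Theory.
Local Open Scope ring_scope.

Section Attention.
Variable R : realFieldType.

Definition xvar (d t : nat) (k : 'I_d) (n : 'I_t) : {mpoly R[d * t]} :=
  'X_(mxvec_index k n).

Definition Xmat (d t : nat) : 'M[{mpoly R[d * t]}]_(d, t) :=
  \matrix_(k < d, n < t) xvar k n.

Definition Amat (a d : nat) (Q K : 'M[R]_(a, d)) : 'M[R]_d := K^T *m Q.

Definition phiW (a d t : nat) (Q K : 'M[R]_(a, d)) (V : 'M[R]_(1, d))
  : 'M[{mpoly R[d * t]}]_(1, t) :=
  let Ap := map_mx (fun c => c%:MP) (Amat Q K) in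
  let Vp := map_mx (fun c => c%:MP) V in
  Vp *m Xmat d t *m ((Xmat d t)^T *m Ap *m Xmat d t).

(* A multiset on [d] is represented by any list of its elements;
   the monomial prod_{u in K} x_{uj} as an exponent vector *)
Definition monoK (d t : nat) (j : 'I_t) (Ks : seq 'I_d) : 'X_{1..d * t} :=
  (\big[+%MM/0%MM]_(u <- Ks) U_(mxvec_index u j))%MM.

(* |Perm(K)| = number of distinct orderings of K *)
Definition nPerm (d : nat) (Ks : seq 'I_d) : nat := size (permutations Ks).

Definition cj (a d t : nat) (Q K : 'M[R]_(a, d)) (V : 'M[R]_(1, d))
  (j : 'I_t) (Ks : seq 'I_d) : R :=
  (@phiW a d t Q K V 0 j)@_(monoK j Ks).

Definition yj (a d t : nat) (Q K : 'M[R]_(a, d)) (V : 'M[R]_(1, d))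
  (j : 'I_t) (Ks : seq 'I_d) : R :=
  cj Q K V j Ks / (nPerm Ks)%:R.

Definition Tten (a d t : nat) (Q K : 'M[R]_(a, d)) (V : 'M[R]_(1, d))
  (j : 'I_t) (k1 k2 k3 : 'I_d) : R :=
  yj Q K V j [:: k1; k2; k3].

Definition fT (a d t : nat) (Q K : 'M[R]_(a, d)) (V : 'M[R]_(1, d))
  (j : 'I_t) : {mpoly R[d]} :=
  \sum_(k1 < d) \sum_(k2 < d) \sum_(k3 < d)
     Tten Q K V j k1 k2 k3 *: ('X_k1 * 'X_k2 * 'X_k3).

Definition Nmat (a d t : nat) (Q K : 'M[R]_(a, d)) (V : 'M[R]_(1, d))
  (j : 'I_t) : 'M[R]_d :=
  \matrix_(k < d, k3 < d) Tten Q K V j k k k3.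

Definition quadform (d : nat) (A : 'M[R]_d) : {mpoly R[d]} :=
  \sum_(p < d) \sum_(q < d) A p q *: ('X_p * 'X_q).
Definition linform (d : nat) (V : 'M[R]_(1, d)) : {mpoly R[d]} :=
  \sum_(k < d) V 0 k *: 'X_k.

Definition Mono3 (d : nat) := {m : 'X_{1..d < 4} | mdeg m == 3%N}.

(* basis of sl_d: E_uv (u <> v) and H_u = E_uu - E_dd (u < d, i.e. u not last) *)
Definition LieIdx (d : nat) :=
  ({p : 'I_d * 'I_d | p.1 != p.2} + {u : 'I_d | ((val u).+1 < d)%N})%type.

Definition Eact (d : nat) (u v : 'I_d) (f : {mpoly R[d]}) : {mpoly R[d]} :=
  'X_u * f^`M(v).

(* action of a basis element of sl_d on a cubic; the last index d is the
   unique w : 'I_d with val w = d - 1 *)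
Definition lieAct (d : nat) (b : LieIdx d) (f : {mpoly R[d]}) : {mpoly R[d]} :=
  match b with
  | inl p => Eact (val p).1 (val p).2 f
  | inr u => Eact (val u) (val u) f
             - \sum_(w : 'I_d | val w == d.-1) Eact w w f
  end.

Definition MLie (d : nat) (f : {mpoly R[d]})
  : 'M[R]_(#|{: Mono3 d}|, #|{: LieIdx d}|) :=
  \matrix_(i, b) (lieAct (enum_val b) f)@_(val (val (enum_val i)) : 'X_{1..d}).

End Attention.

From HB Require Import structures.
From mathcomp Require Import all_boot all_order all_algebra.
From mathcomp Require Import mpoly.
From mathcomp Require Import ring lra zify.
Set Implicit Arguments. Unset Strict Implicit. Unset Printing Implicit Defensive.
Import Order.TTheory GRing.Theory Num.Theory.
Local Open Scope ring_scope.

(* Only the monomials x_{kj} x_{pj} x_{qj} of column j matter, and phi_W(X)[1,j] contains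
   them with coefficients v_k A_{pq}. Hence T is the symmetrization of v_k A_{pq}, so that
   f_T = (x^T A x)(v x) and N = (diag(v)(A + A^T) + diag(A) v)/3, whose rank is at most
   rank(A + A^T) + 1 <= 2 rank A + 1. For the flattening, the derivation x^T M d/dx of a
   traceless M sends (x^T A x)(v x) to (x^T M(A + A^T) x)(v x) + (x^T A x)(x^T M v^T),
   which vanishes when M v^T = 0 and M(A + A^T) is skew-symmetric. For d >= 3 such a
   nonzero M exists, and its coordinates give a nonzero vector in the kernel of
   M_Lie(f_T). *)

Lemma sum_mul_eq_nat (R : pzSemiRingType) (T : finType) (G : T -> R) q :
  \sum_r G r * (r == q)%:R = G q.
Proof. by rewrite (bigD1 q) //= eqxx mulr1 big1 ?addr0 // => r /negbTE->; rewrite mulr0. Qed.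

Lemma mxvec_index_eq m n (i1 i2 : 'I_m) (j1 j2 : 'I_n) :
  (mxvec_index i1 j1 == mxvec_index i2 j2) = (i1 == i2) && (j1 == j2).
Proof.
apply/eqP/andP => [|[/eqP-> /eqP->]] //.
by rewrite /mxvec_index => /cast_ord_inj /enum_rank_inj [-> ->].
Qed.

Lemma perm_eq_mxvec_index d t (j n : 'I_t) (k p q a1 a2 a3 : 'I_d) :
  perm_eq [:: mxvec_index k n; mxvec_index p n; mxvec_index q j]
          [:: mxvec_index a1 j; mxvec_index a2 j; mxvec_index a3 j]
  = (n == j) && perm_eq [:: k; p; q] [:: a1; a2; a3].
Proof.
have [->|nj] := eqVneq n j.
  have idx_inj : injective (fun u : 'I_d => mxvec_index u j).
    by move=> u w /eqP; rewrite mxvec_index_eq eqxx andbT => /eqP.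
  apply/idP/idP => [H|H]; first exact: (perm_map_inj idx_inj).
  exact: (perm_map (fun u => mxvec_index u j) H).
apply/negbTE/negP => /perm_mem/(_ (mxvec_index k n)).
by rewrite !inE eqxx /= !mxvec_index_eq (negbTE nj) !andbF.
Qed.

Lemma mnm_sumU n (s : seq 'I_n) i :
  (\big[+%MM/0%MM]_(u <- s) U_(u))%MM i = count_mem i s.
Proof.
rewrite mnm_sumE; elim: s => [|u s IHs]; first by rewrite big_nil.
by rewrite big_cons IHs mnm1E /= eq_sym.
Qed.

Lemma eq_mnm_sumU n (s1 s2 : seq 'I_n) :
  ((\big[+%MM/0%MM]_(u <- s1) U_(u))%MM == (\big[+%MM/0%MM]_(u <- s2) U_(u))%MM)
  = perm_eq s1 s2.
Proof.
apply/eqP/idP => [E|s12]; last exact: perm_big.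
by apply/allP => i _; apply/eqP; rewrite -!mnm_sumU E.
Qed.

Definition triple_seq (T : Type) (q : T * (T * T)) : seq T := [:: q.1; q.2.1; q.2.2].

Lemma card_perm_triple_seq (T : finType) (s : seq T) : size s = 3%N ->
  #|[pred q | perm_eq (triple_seq q) s]| = size (permutations s).
Proof.
move=> s3; set L := [seq triple_seq q | q <- enum [pred q | perm_eq (triple_seq q) s]].
have triple_seq_inj : injective (@triple_seq T) by move=> [x [y z]] [x' [y' z']] [-> -> ->].
have uniqL : uniq L by rewrite map_inj_uniq ?enum_uniq.
have memL : L =i permutations s.
  move=> u; rewrite mem_permutations; apply/mapP/idP => [[q]|su].
    by rewrite mem_enum inE => ? ->.
  have := perm_size su; rewrite s3.
  case: u su => [|x [|y [|z [|w u]]]] //= su _.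
  by exists (x, (y, z)); rewrite // mem_enum inE.
rewrite cardE -(size_map (@triple_seq T)).
exact: perm_size (uniq_perm uniqL (permutations_uniq s) memL).
Qed.

Lemma perm_eq_kkc (T : eqType) (x y z k c : T) : k != c ->
  perm_eq [:: x; y; z] [:: k; k; c] =
  [|| [&& x == k, y == k & z == c], [&& x == k, y == c & z == k] | [&& x == c, y == k & z == k]].
Proof.
move=> kc; have ck : c != k by rewrite eq_sym.
apply/idP/idP => [xyz|]; last first.
  by case/or3P => /and3P[/eqP-> /eqP-> /eqP->]; rewrite /perm_eq /= !eqxx ?(negbTE kc) ?(negbTE ck).
have in_kc w : w \in [:: x; y; z] -> (w == k) || (w == c).
  by rewrite (perm_mem xyz) !inE orbA orbb.
move: xyz; have /in_kc : x \in [:: x; y; z] by rewrite !inE eqxx.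
have /in_kc : y \in [:: x; y; z] by rewrite !inE eqxx orbT.
have /in_kc : z \in [:: x; y; z] by rewrite !inE eqxx !orbT.
by do 3!case/orP=> /eqP->; rewrite /perm_eq /= !eqxx ?(negbTE kc) ?(negbTE ck).
Qed.

Section Symmetrize.
Variables (R : numFieldType) (T : finType).
Implicit Types (F : T * (T * T) -> R) (q r : T * (T * T)).

Local Notation "[ r ~ q ]" := (perm_eq (triple_seq r) (triple_seq q) : bool)
  (format "[ r  ~  q ]").

Definition symmetrize3 F q : R :=
  (\sum_r F r * [r ~ q]%:R) / (\sum_r [r ~ q]%:R).

Lemma nat_perm_triple_seq q :
  (size (permutations (triple_seq q)))%:R = \sum_r [r ~ q]%:R :> R.
Proof.
rewrite -card_perm_triple_seq // -natr_sum -sum1_card big_mkcond /=.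
by congr _%:R; apply: eq_bigr => r _; rewrite inE; case: ifP.
Qed.

Lemma sum_symmetrize3 (W : lmodType R) F (G : T * (T * T) -> W) :
  (forall q r, [r ~ q] -> G q = G r) ->
  \sum_q symmetrize3 F q *: G q = \sum_r F r *: G r.
Proof.
move=> G_sym; pose n q := \sum_r [r ~ q]%:R : R.
have n_sym q r : [r ~ q] -> n q = n r.
  by move=> rq; apply: eq_bigr => r' _; rewrite (permPr rq (triple_seq r')).
have n_neq0 r : n r != 0.
  by rewrite /n -natr_sum pnatr_eq0 -lt0n (bigD1 r) //= perm_refl.
transitivity (\sum_q \sum_r (F r / n r * [r ~ q]%:R) *: G r).
  apply: eq_bigr => q _; rewrite /symmetrize3 mulr_suml scaler_suml; apply: eq_bigr => r _.
  case rq: [r ~ q]; last by rewrite !mulr0 !mul0r !scale0r.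
  by rewrite -/(n q) (n_sym _ _ rq) (G_sym _ _ rq) !mulr1.
rewrite exchange_big /=; apply: eq_bigr => r _.
rewrite -scaler_suml -mulr_sumr -[in RHS](mulr1 (F r)) -mulrA.
have -> : \sum_q [r ~ q]%:R = n r by apply: eq_bigr => q _; rewrite perm_sym.
by rewrite mulVf.
Qed.

Lemma symmetrize3_diag F (k : T) : symmetrize3 F (k, (k, k)) = F (k, (k, k)).
Proof.
have class_kkk r : [r ~ (k, (k, k))] = (r == (k, (k, k))).
  case: r => x [y z]; rewrite /triple_seq /= !xpair_eqE.
  apply/idP/idP => [/perm_mem kkk|/and3P[/eqP-> /eqP-> /eqP->] //].
  have in_kkk w : w \in [:: x; y; z] -> w == k by rewrite kkk !inE !orbb.
  by rewrite !in_kkk ?inE ?eqxx ?orbT.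
rewrite /symmetrize3; under eq_bigr do rewrite class_kkk.
under [X in _ / X]eq_bigr do rewrite class_kkk -[_%:R]mul1r.
by rewrite !sum_mul_eq_nat divr1.
Qed.

Lemma symmetrize3_pair F (k c : T) : k != c ->
  symmetrize3 F (k, (k, c)) = (F (k, (k, c)) + F (k, (c, k)) + F (c, (k, k))) / 3%:R.
Proof.
move=> kc; set q1 := (k, (k, c)); set q2 := (k, (c, k)); set q3 := (c, (k, k)).
have [n12 n13 n23] : [/\ q1 != q2, q1 != q3 & q2 != q3].
  by split; rewrite !xpair_eqE ?eqxx (negbTE kc) ?andbF.
have class_kkc r : [r ~ q1]%:R = (r == q1)%:R + (r == q2)%:R + (r == q3)%:R :> R.
  have -> : [r ~ q1] = [|| r == q1, r == q2 | r == q3].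
    by case: r => x [y z]; rewrite /triple_seq perm_eq_kkc // !xpair_eqE.
  have [->|r1] := eqVneq r q1; first by rewrite (negbTE n12) (negbTE n13) !addr0.
  have [->|r2] := eqVneq r q2; first by rewrite (negbTE n23) add0r addr0.
  by rewrite add0r; case: eqVneq; rewrite ?add0r.
rewrite /symmetrize3; under eq_bigr do rewrite class_kkc !mulrDr.
under [X in _ / X]eq_bigr do rewrite class_kkc -[(_ == q1)%:R]mul1r
   -[(_ == q2)%:R]mul1r -[(_ == q3)%:R]mul1r.
by rewrite !big_split /= !sum_mul_eq_nat; congr (_ / _); ring.
Qed.

End Symmetrize.

Lemma sumr_pair (W : nmodType) (I J : finType) (G : I * J -> W) :
  \sum_r G r = \sum_i \sum_j G (i, j).
Proof. by rewrite pair_bigA; apply: eq_bigr => -[]. Qed.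

Section AttentionCubic.
Variables (R : realFieldType) (a d t : nat) (Q K : 'M[R]_(a, d)) (V : 'M[R]_(1, d)) (j : 'I_t).
Local Notation A := (Amat Q K).
Local Notation idx := (@mxvec_index d t).

Definition cubic_coef (r : 'I_d * ('I_d * 'I_d)) : R := V 0 r.1 * A r.2.1 r.2.2.

Lemma phiW_entry : phiW t Q K V 0 j = \sum_n \sum_r
  cubic_coef r *: 'X_[(\big[+%MM/0%MM]_(u <- [:: idx r.1 n; idx r.2.1 n; idx r.2.2 j]) U_(u))%MM].
Proof.
rewrite /phiW !mxE; apply: eq_bigr => n _.
rewrite sumr_pair !mxE big_distrl /=; apply: eq_bigr => k _.
rewrite sumr_pair !mxE big_distrr /=.
under eq_bigr do rewrite !mxE big_distrl big_distrr /=.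
rewrite exchange_big; apply: eq_bigr => p _; apply: eq_bigr => q _.
rewrite !mxE !big_cons big_nil addm0 !mpolyXD /xvar /cubic_coef /= [A p q]mxE.
rewrite -mul_mpolyC mpolyCM.
ring.
Qed.

Lemma cj_triple_seq q : cj Q K V j (triple_seq q) =
  \sum_r cubic_coef r * (perm_eq (triple_seq r) (triple_seq q))%:R.
Proof.
have coefX n r : ('X_[(\big[+%MM/0%MM]_(u <- [:: idx r.1 n; idx r.2.1 n; idx r.2.2 j]) U_(u))%MM]
    : {mpoly R[d * t]})@_(monoK j (triple_seq q))
    = ((n == j) && perm_eq (triple_seq r) (triple_seq q))%:R.
  rewrite mcoeffX /monoK -(big_map (fun u => idx u j) xpredT (fun i => U_(i)%MM)).
  by rewrite eq_mnm_sumU /triple_seq /= perm_eq_mxvec_index.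
rewrite /cj phiW_entry raddf_sum (bigD1 j) //= [X in _ + X]big1 ?addr0 => [|n nj].
  by rewrite raddf_sum; apply: eq_bigr => r _ /=; rewrite mcoeffZ coefX eqxx.
by rewrite raddf_sum big1 // => r _ /=; rewrite mcoeffZ coefX (negbTE nj) mulr0.
Qed.

Lemma Tten_symmetrize3 q : Tten Q K V j q.1 q.2.1 q.2.2 = symmetrize3 cubic_coef q.
Proof.
by rewrite /Tten /yj -[[:: q.1; _; _]]/(triple_seq q) cj_triple_seq /nPerm nat_perm_triple_seq.
Qed.

Lemma fT_factor : fT Q K V j = quadform A * linform V.
Proof.
have monoE q : 'X_q.1 * 'X_q.2.1 * 'X_q.2.2 = \prod_(u <- triple_seq q) 'X_u :> {mpoly R[d]}.
  by rewrite !big_cons big_nil mulr1 mulrA.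
rewrite /fT; under eq_bigr do rewrite pair_bigA /=.
rewrite pair_bigA /=; under eq_bigr do rewrite (Tten_symmetrize3 (_, _)).
rewrite sum_symmetrize3 => [|q r rq]; last by rewrite !monoE (perm_big _ rq).
rewrite sumr_pair /quadform /linform mulrC mulr_suml; apply: eq_bigr => k _.
rewrite sumr_pair mulr_sumr; apply: eq_bigr => p _.
rewrite mulr_sumr; apply: eq_bigr => q _.
by rewrite /cubic_coef /= -scalerAl -scalerAr scalerA mulrC !mulrA.
Qed.

Lemma Nmat_entry k c :
  Nmat Q K V j k c = (V 0 k * (A k c + A c k) + V 0 c * A k k) / 3%:R.
Proof.
rewrite mxE; have /= -> := Tten_symmetrize3 (k, (k, c)).
have [<-|kc] := eqVneq k c; first by rewrite symmetrize3_diag /cubic_coef /=; field.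
by rewrite symmetrize3_pair // /cubic_coef /=; congr (_ / _); ring.
Qed.

Lemma NmatE : Nmat Q K V j = 3%:R^-1 *: (diag_mx V *m (A + A^T) + (\col_k A k k) *m V).
Proof.
apply/matrixP => k c; rewrite Nmat_entry; move: (Amat Q K) => B.
by rewrite mul_diag_mx !mxE big_ord1 !mxE mulrC [B k k * _]mulrC.
Qed.

Lemma mxrank_Nmat : (\rank (Nmat Q K V j) <= 2 * \rank A + 1)%N.
Proof.
rewrite NmatE; apply: leq_trans (mxrank_scale _ _) _.
apply: leq_trans (mxrank_add _ _) _; apply: leq_add.
  apply: leq_trans (mxrankM_maxr _ _) _; apply: leq_trans (mxrank_add _ _) _.
  by rewrite mxrank_tr addnn -mul2n.
exact: leq_trans (mxrankM_maxr _ _) (rank_leq_row _).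
Qed.

End AttentionCubic.

Lemma mxrank_mxsub (F : fieldType) m n m' n' (r : 'I_m' -> 'I_m) (c : 'I_n' -> 'I_n)
    (M : 'M[F]_(m, n)) :
  (\rank (mxsub r c M) <= \rank M)%N.
Proof.
have -> : mxsub r c M = rowsub r (rowsub c M^T)^T by apply/matrixP => i k; rewrite !mxE.
apply: leq_trans (mxrankS (rowsub_sub _ _)) _.
by rewrite mxrank_tr -[leqRHS]mxrank_tr mxrankS // rowsub_sub.
Qed.

Lemma det_mxsub_eq0 (F : fieldType) m n k (r : 'I_k -> 'I_m) (c : 'I_k -> 'I_n)
    (M : 'M[F]_(m, n)) :
  (\rank M < k)%N -> \det (mxsub r c M) = 0.
Proof.
move=> rkM; apply/eqP; apply: contraLR rkM.
rewrite -unitfE -unitmxE -leqNgt => /mxrank_unit <-; exact: mxrank_mxsub.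
Qed.

Lemma exists_nonzero_kernel (F : fieldType) m n (B : 'M[F]_(m, n)) : (m < n)%N ->
  exists2 y : 'cV[F]_n, y != 0 & B *m y = 0.
Proof.
move=> mn; have : kermx B^T != 0.
  rewrite -mxrank_eq0 mxrank_ker mxrank_tr subn_eq0 -ltnNge.
  exact: leq_ltn_trans (rank_leq_row B) mn.
case/matrix0Pn => i [k nz_ik]; exists (row i (kermx B^T))^T.
  by rewrite trmx_eq0; apply/matrix0Pn; exists 0, k; rewrite mxE.
by apply: trmx_inj; rewrite trmx_mul trmxK trmx0; apply/sub_kermxP; rewrite row_sub.
Qed.

Lemma trmx_mul_self_neq0 (R : realFieldType) n (y : 'cV[R]_n) : y != 0 -> (y^T *m y) 0 0 != 0.
Proof.
move=> ny; rewrite mxE; apply: contra ny => /eqP yy0.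
have sq_ge0 i : xpredT i -> 0 <= y^T 0 i * y i 0 by rewrite mxE -expr2 sqr_ge0.
apply/eqP/matrixP => i k; rewrite (ord1 k) mxE.
have := @psumr_eq0P _ _ xpredT _ sq_ge0 yy0 i isT.
by rewrite mxE => /eqP; rewrite mulf_eq0 orbb => /eqP.
Qed.

Section Annihilator.
Variables (R : realFieldType) (d : nat) (v : 'rV[R]_d) (S : 'M[R]_d).
Hypothesis S_sym : S^T = S.

Definition annihilates (M : 'M[R]_d) : Prop :=
  [/\ M *m v^T = 0, \tr M = 0 & (M *m S)^T = - (M *m S)].

Lemma annihilator_of_nonradical (x : 'cV[R]_d) : (3 <= d)%N -> v *m x = 0 -> S *m x != 0 ->
  exists2 M, M != 0 & annihilates M.
Proof.
move=> d3 vx Sx.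
have [y ny] := exists_nonzero_kernel (col_mx v x^T) (leq_trans (isT : (2 < 3)%N) d3).
rewrite mul_col_mx => /eqP; rewrite -col_mx0 => /eqP /eq_col_mx [vy xy].
pose B := x *m y^T - y *m x^T.
have B_skew : B^T = - B by rewrite /B linearB /= !trmx_mul !trmxK opprB.
exists (S *m B); last split.
- (* [S B y = |y|^2 S x] *)
  apply: contraNneq Sx => SB0; have := congr1 (mulmx^~ y) SB0.
  rewrite mul0mx /B mulmxBr mulmxBl -!mulmxA xy !mulmx0 subr0.
  rewrite [y^T *m y]mx11_scalar mul_mx_scalar -scalemxAr => /eqP.
  by rewrite scalemx_eq0 (negbTE (trmx_mul_self_neq0 ny)).
- by rewrite /B -mulmxA mulmxBl -!mulmxA -!trmx_mul vy vx trmx0 !mulmx0 subr0 mulmx0.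
- have : \tr (S *m B) = - \tr (S *m B).
    by rewrite -[in LHS]mxtrace_tr trmx_mul B_skew S_sym mulNmx raddfN /= mxtrace_mulC.
  by move=> trSB; lra.
- by rewrite !trmx_mul S_sym B_skew mulNmx mulmxN mulmxA.
Qed.

Lemma annihilator_of_radical (y : 'cV[R]_d) : (1 < d)%N -> y != 0 -> v *m y = 0 ->
  y^T *m S = 0 -> exists2 M, M != 0 & annihilates M.
Proof.
move=> d1 ny vy yS; have [z nz yz] := exists_nonzero_kernel y^T d1.
exists (z *m y^T); last split.
- apply: contraNneq nz => zy0; have := congr1 (mulmx^~ y) zy0.
  rewrite mul0mx -mulmxA [y^T *m y]mx11_scalar mul_mx_scalar => /eqP.
  by rewrite scalemx_eq0 (negbTE (trmx_mul_self_neq0 ny)).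
- by rewrite -mulmxA -trmx_mul vy trmx0 mulmx0.
- by rewrite mxtrace_mulC yz mxtrace0.
- by rewrite -mulmxA yS mulmx0 trmx0 oppr0.
Qed.

Lemma exists_annihilator : (3 <= d)%N -> exists2 M, M != 0 & annihilates M.
Proof.
move=> d3; have d1 : (1 < d)%N by apply: leq_trans d3.
have [kerS0|/matrix0Pn[i [k nz_ik]]] := eqVneq (kermx v^T *m S) 0.
  have [y ny vy] := exists_nonzero_kernel v d1.
  apply: (annihilator_of_radical d1 ny vy).
  have /submxP[D ->] : (y^T <= kermx v^T)%MS.
    by apply/sub_kermxP; rewrite -trmx_mul vy trmx0.
  by rewrite -mulmxA kerS0 mulmx0.
apply: (annihilator_of_nonradical (x := (row i (kermx v^T))^T) d3).
  by apply: trmx_inj; rewrite trmx_mul trmxK trmx0; apply/sub_kermxP; rewrite row_sub.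
rewrite -trmx_eq0 trmx_mul trmxK S_sym -row_mul; apply/matrix0Pn.
by exists 0, k; rewrite mxE.
Qed.

End Annihilator.

Section SlAction.
Variables (R : realFieldType) (d : nat).
Implicit Types (M B : 'M[R]_d) (w : 'rV[R]_d) (f g : {mpoly R[d]}).

Definition sl_act M f : {mpoly R[d]} := \sum_u \sum_v M u v *: Eact u v f.

Lemma sl_actM M f g : sl_act M (f * g) = sl_act M f * g + f * sl_act M g.
Proof.
rewrite /sl_act /Eact mulr_suml mulr_sumr -big_split /=; apply: eq_bigr => u _.
rewrite mulr_suml mulr_sumr -big_split /=; apply: eq_bigr => v _.
by rewrite mderivM -scalerAl -scalerAr -scalerDr; congr (_ *: _); ring.
Qed.

Lemma mderivXi (k i : 'I_d) : ('X_k : {mpoly R[d]})^`M(i) = ((k == i)%:R)%:MP.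
Proof.
rewrite mderivX mnm1E; case: eqP => [->|_]; last by rewrite scale0r.
rewrite (_ : U_(i) - U_(i) = 0)%MM ?mpolyX0 ?scale1r //.
by apply/mnmP => l; rewrite mnmBE mnm0E subnn.
Qed.

Lemma mderiv_linform w i : (linform w)^`M(i) = (w 0 i)%:MP.
Proof.
rewrite /linform raddf_sum /=.
under eq_bigr do rewrite mderivZ mderivXi -mul_mpolyC -mpolyCM.
by rewrite -rmorph_sum sum_mul_eq_nat.
Qed.

Lemma mderiv_quadform B i : (quadform B)^`M(i) = \sum_w (B i w + B w i) *: 'X_w.
Proof.
rewrite /quadform raddf_sum /=.
under eq_bigr do rewrite raddf_sum /=.
under eq_bigr => p _ do under eq_bigr => q _ do
  rewrite mderivZ mderivM !mderivXi !mul_mpolyC mulrC mul_mpolyC scalerDr !scalerA.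
rewrite (eq_bigr _ (fun p _ => big_split _ _ _ _ _)) big_split /= exchange_big /=.
under eq_bigr do rewrite -scaler_suml sum_mul_eq_nat.
under [X in _ + X]eq_bigr do rewrite -scaler_suml sum_mul_eq_nat.
by rewrite -big_split /=; apply: eq_bigr => w _; rewrite scalerDl.
Qed.

Lemma sl_act_linform M w : sl_act M (linform w) = linform (M *m w^T)^T.
Proof.
rewrite /sl_act /Eact; under eq_bigr do under eq_bigr do rewrite mderiv_linform.
rewrite /linform; apply: eq_bigr => u _.
under eq_bigr do rewrite mulrC mul_mpolyC scalerA.
by rewrite -scaler_suml !mxE; congr (_ *: _); apply: eq_bigr => v _; rewrite !mxE.
Qed.

Lemma sl_act_quadform M B : sl_act M (quadform B) = quadform (M *m (B + B^T)).
Proof.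
rewrite /sl_act /Eact; under eq_bigr do under eq_bigr do rewrite mderiv_quadform.
rewrite /quadform; apply: eq_bigr => u _.
under [RHS]eq_bigr do rewrite mxE scaler_suml.
rewrite exchange_big /=; apply: eq_bigr => v _.
rewrite mulr_sumr scaler_sumr; apply: eq_bigr => x _.
by rewrite !mxE -scalerAr scalerA.
Qed.

Lemma quadform_skew B : B^T = - B -> quadform B = 0.
Proof.
move=> B_skew; have : quadform B = - quadform B.
  rewrite {1}/quadform exchange_big /= /quadform -sumrN; apply: eq_bigr => u _.
  rewrite -sumrN; apply: eq_bigr => v _.
  have := congr1 (fun X : 'M[R]_d => X v u) B_skew; rewrite !mxE => ->.
  by rewrite scaleNr opprK mulrC.
move/eqP; rewrite -subr_eq0 opprK -mulr2n -scaler_nat scaler_eq0 pnatr_eq0 /=.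
by move/eqP.
Qed.

Lemma sl_act_quadform_linform M B w :
  M *m w^T = 0 -> (M *m (B + B^T))^T = - (M *m (B + B^T)) ->
  sl_act M (quadform B * linform w) = 0.
Proof.
move=> Mw MB_skew; rewrite sl_actM sl_act_linform sl_act_quadform Mw quadform_skew //.
by rewrite mul0r add0r /linform big1 ?mulr0 // => k _; rewrite !mxE scale0r.
Qed.

End SlAction.

Lemma big_sig (W : nmodType) (I : finType) (P : pred I) (F : I -> W) :
  \sum_(x : {i | P i}) F (val x) = \sum_(i | P i) F i.
Proof.
rewrite [RHS](reindex_omap (val : {i | P i} -> I) insub) => [|i Pi]; last by rewrite insubT.
by apply: eq_bigl => -[i Pi] /=; rewrite Pi insubT /= eqxx.
Qed.

Section LieFlattening.
Variables (R : realFieldType) (n : nat).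
Local Notation d := n.+1.

(* Coordinates of a traceless M in the basis of LieIdx: the coefficient of H_u is M_uu
   because tr M = 0. *)
Definition sl_coord (M : 'M[R]_d) (b : LieIdx d) : R :=
  match b with inl p => M (val p).1 (val p).2 | inr u => M (val u) (val u) end.

Lemma lt_ord_max (u : 'I_d) : ((val u).+1 < d)%N = (u != ord_max).
Proof. by rewrite ltnS ltn_neqAle -ltnS ltn_ord andbT -val_eqE. Qed.

Lemma sum_lieAct (M : 'M[R]_d) f : \tr M = 0 ->
  \sum_b sl_coord M b *: lieAct b f = sl_act M f.
Proof.
move=> trM; rewrite big_sumType /=.
have -> : \sum_(w : 'I_d | val w == d.-1) Eact w w f = Eact ord_max ord_max f.
  by rewrite (big_pred1 ord_max) // => w; rewrite /= -val_eqE.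
rewrite (big_sig _ (fun p : 'I_d * 'I_d => M p.1 p.2 *: Eact p.1 p.2 f)).
rewrite (big_sig _ (fun u : 'I_d => M u u *: (Eact u u f - Eact ord_max ord_max f))).
under [X in _ + X]eq_bigl do rewrite lt_ord_max.
under [X in _ + X]eq_bigr do rewrite scalerBr.
have trM' : \sum_(u | u != ord_max) M u u = - M ord_max ord_max.
  by move: trM; rewrite /mxtrace (bigD1 ord_max) //= addrC => /eqP; rewrite addr_eq0 => /eqP.
rewrite sumrB -scaler_suml trM' scaleNr opprK /sl_act.
rewrite [RHS](eq_bigr (fun u => M u u *: Eact u u f + \sum_(v | u != v) M u v *: Eact u v f)).
  by rewrite big_split /= [X in _ = X + _](bigD1 ord_max) //= pair_big_dep /=; ring.
by move=> u _; rewrite (bigD1 u) //=; congr (_ + _); apply: eq_bigl => v; rewrite eq_sym.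
Qed.

Lemma sl_coord_eq0 (M : 'M[R]_d) : \tr M = 0 -> (forall b, sl_coord M b = 0) -> M = 0.
Proof.
move=> trM coord0; apply/matrixP => u v; rewrite mxE.
have [<-|uv] := eqVneq u v; last exact: (coord0 (inl (exist _ (u, v) uv))).
have [->|um] := eqVneq u ord_max.
  move: trM; rewrite /mxtrace (bigD1 ord_max) //= big1 ?addr0 // => w wm.
  by have := coord0 (inr (exist _ w _)); apply; rewrite lt_ord_max.
by have := coord0 (inr (exist _ u _)); apply; rewrite lt_ord_max.
Qed.

Lemma MLie_rank_lt f (M : 'M[R]_d) : M != 0 -> \tr M = 0 -> sl_act M f = 0 ->
  (\rank (MLie f) < #|{: LieIdx d}|)%N.
Proof.
move=> nzM trM Mf0; pose w : 'cV[R]_#|{: LieIdx d}| := \col_b sl_coord M (enum_val b).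
have MLie_w : MLie f *m w = 0.
  apply/matrixP => i k; rewrite !mxE.
  transitivity ((\sum_(b < #|{: LieIdx d}|)
      sl_coord M (enum_val b) *: lieAct (enum_val b) f)@_(val (val (enum_val i)))).
    by rewrite raddf_sum; apply: eq_bigr => b _ /=; rewrite !mxE mcoeffZ mulrC.
  rewrite -(big_enum_val (A := {: LieIdx d}) (fun b => sl_coord M b *: lieAct b f)) /=.
  by rewrite (eq_bigl (fun _ => true)) // sum_lieAct // Mf0 mcoeff0.
have nz_w : w != 0.
  apply: contraNneq nzM => w0; apply/eqP/sl_coord_eq0 => // b.
  have := congr1 (fun X : 'cV[R]_#|{: LieIdx d}| => X (enum_rank b) 0) w0.
  by rewrite !mxE enum_rankK.
apply: leq_trans (mulmx0_rank_max MLie_w); rewrite -addn1 leq_add2l.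
by rewrite lt0n mxrank_eq0.
Qed.

Lemma card_LieIdx : #|{: LieIdx d}| = (d ^ 2).-1%N.
Proof.
rewrite card_sum !card_sig.
have -> : #|[pred u : 'I_d | ((val u).+1 < d)%N]| = n.
  rewrite -[n]/(d.-1) -[in RHS](card_ord d) -(cardC1 ord_max).
  by apply: eq_card => u; rewrite !inE lt_ord_max.
have card_diag : #|[pred p : 'I_d * 'I_d | p.1 == p.2]| = d.
  rewrite -[RHS](card_ord d) -(card_image (f := fun u : 'I_d => (u, u))) => [|x y []//].
  apply: eq_card => -[x y]; rewrite !inE /=; apply/eqP/imageP => [->|[z _ [-> ->]]] //.
  by exists y.
have := cardC [pred p : 'I_d * 'I_d | p.1 == p.2]; rewrite card_prod card_ord card_diag.
rewrite (eq_card (B := [pred p : 'I_d * 'I_d | p.1 != p.2])) => [|p]; last by rewrite !inE.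
by move=> E; rewrite expnS expn1; lia.
Qed.

End LieFlattening.

Theorem mainTheorem7 (R : realFieldType) (a d t : nat)
  (Q K : 'M[R]_(a, d)) (V : 'M[R]_(1, d)) (j : 'I_t) :
  (3 <= d)%N ->
  let A := Amat Q K in
  let N := Nmat Q K V j in
  let f := fT Q K V j in
  (* (1) *)
  ((\rank N <= 2 * \rank A + 1)%N /\
   ((2 * \rank A + 1 < d)%N ->
    forall (r c : 'I_(2 * \rank A + 2) -> 'I_d),
      injective r -> injective c -> \det (mxsub r c N) = 0)) /\
  (* (2) *)
  (f = quadform A * linform V /\
   (\rank (MLie f) < (d ^ 2).-1)%N /\
   (forall (r : 'I_((d ^ 2).-1) -> 'I_#|{: Mono3 d}|)
           (c : 'I_((d ^ 2).-1) -> 'I_#|{: LieIdx d}|),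
      injective r -> injective c -> \det (mxsub r c (MLie f)) = 0)).
Proof.
move: Q K V; case: d => // n Q K V d3 A N f.
have rkN : (\rank N <= 2 * \rank A + 1)%N := mxrank_Nmat Q K V j.
have f_factor : f = quadform A * linform V := fT_factor Q K V j.
have sym_AAt : (A + A^T)^T = A + A^T by rewrite linearD /= trmxK addrC.
have [M nzM [MV trM MAAt_skew]] := exists_annihilator V sym_AAt d3.
have rk_MLie : (\rank (MLie f) < (n.+1 ^ 2).-1)%N.
  rewrite -card_LieIdx (MLie_rank_lt nzM trM) // f_factor.
  exact: sl_act_quadform_linform MV MAAt_skew.
split; first by split=> // _ r c _ _; apply: det_mxsub_eq0; lia.
by split=> //; split=> // r c _ _; apply: det_mxsub_eq0.
Qed.
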